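(* Let $(X,d)$ be a metric space with $|X|\geqslant 3$ and let $T\colon X\to X$ be a generalized Ćirić–Reich–Rus type mapping with constants $\alpha,\lambda\geqslant 0$, $2\alpha+\frac{3\lambda}{2}<1$, i.e. $$d(Tx,Ty)+d(Ty,Tz)+d(Tx,Tz)\leqslant \alpha\big(d(x,y)+d(y,z)+d(z,x)\big)+\lambda\big(d(x,Tx)+d(y,Ty)+d(z,Tz)\big)$$ for all pairwise distinct $x,y,z\in X$. If $x$ is an accumulation point of $X$ and $T$ is continuous at $x$, then $$d(Tx,Ty)\leqslant \alpha\, d(x,y)+\lambda\left(d(x,Tx)+\frac{d(y,Ty)}{2}\right)$$ holds for all $y\in X$. *)

From Stdlib Require Import Reals.
Open Scope R_scope.

Definition is_metric {X : Type} (d : X -> X -> R) : Prop :=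
  (forall x y, 0 <= d x y) /\
  (forall x y, d x y = 0 <-> x = y) /\
  (forall x y, d x y = d y x) /\
  (forall x y z, d x z <= d x y + d y z).

Definition at_least_three (X : Type) : Prop :=
  exists a b c : X, a <> b /\ b <> c /\ a <> c.

Definition gen_CRR {X : Type} (d : X -> X -> R) (T : X -> X) (alpha lambda : R) : Prop :=
  0 <= alpha /\ 0 <= lambda /\ 2 * alpha + 3 * lambda / 2 < 1 /\
  forall x y z : X, x <> y -> y <> z -> x <> z ->
    d (T x) (T y) + d (T y) (T z) + d (T x) (T z)
    <= alpha * (d x y + d y z + d z x) + lambda * (d x (T x) + d y (T y) + d z (T z)).

Definition accumulation_point {X : Type} (d : X -> X -> R) (x : X) : Prop :=
  forall eps, 0 < eps -> exists y, y <> x /\ d x y < eps.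

Definition continuous_at {X : Type} (d : X -> X -> R) (T : X -> X) (x : X) : Prop :=
  forall eps, 0 < eps -> exists delta, 0 < delta /\
    forall y, d x y < delta -> d (T x) (T y) < eps.

(* Take z close to x (possible since x is an accumulation point), distinct from x and y,
   and apply the Ćirić–Reich–Rus inequality to x, y, z.  Bounding d(Tx,Tz) + d(Ty,Tz)
   from below by d(Tx,Ty), d(y,z) from above by d(y,x) + d(x,z) and d(z,Tz) by
   d(z,x) + d(x,Tx) + d(Tx,Tz) leaves twice the claimed inequality up to an error
   proportional to d(x,z) + d(Tx,Tz), which continuity of T at x makes arbitrarily small. *)
From Stdlib Require Import Reals Lra Classical_Prop.
Open Scope R_scope.

Section GenCRR.

Variables (X : Type) (d : X -> X -> R).
Hypothesis d_metric : is_metric d.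

Lemma metric_ge0 (x y : X) : 0 <= d x y.
Proof. apply d_metric. Qed.

Lemma metric_xx (x : X) : d x x = 0.
Proof. now apply d_metric. Qed.

Lemma metric_sym (x y : X) : d x y = d y x.
Proof. apply d_metric. Qed.

Lemma metric_triangle (x y z : X) : d x z <= d x y + d y z.
Proof. apply d_metric. Qed.

Lemma accumulation_point_near_continuous (T : X -> X) (x y : X) :
  accumulation_point d x -> continuous_at d T x -> x <> y ->
  forall eps, 0 < eps ->
  exists z, z <> x /\ z <> y /\ d x z < eps /\ d (T x) (T z) < eps.
Proof.
  intros Hacc Hcont Hxy eps Heps.
  destruct (Hcont eps Heps) as [delta [Hdelta HTdelta]].
  assert (Hdxy : 0 < d x y).
  { destruct (Rle_lt_or_eq_dec _ _ (metric_ge0 x y)) as [|E]; [assumption|].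
    now apply eq_sym, d_metric in E. }
  set (e := Rmin eps (Rmin delta (d x y))).
  assert (He : 0 < e) by (repeat apply Rmin_pos; assumption).
  destruct (Hacc e He) as [z [Hzx Hdz]].
  assert (e <= eps) by apply Rmin_l.
  assert (e <= delta) by (eapply Rle_trans; [apply Rmin_r | apply Rmin_l]).
  assert (e <= d x y) by (eapply Rle_trans; [apply Rmin_r | apply Rmin_r]).
  exists z; repeat split.
  - exact Hzx.
  - intros ->; lra.
  - lra.
  - apply HTdelta; lra.
Qed.

Lemma gen_CRR_twice_bound (T : X -> X) (alpha lambda : R) (x y z : X) :
  gen_CRR d T alpha lambda -> x <> y -> y <> z -> x <> z ->
  2 * d (T x) (T y)
  <= 2 * alpha * d x y + lambda * (2 * d x (T x) + d y (T y))
     + (2 * alpha + lambda) * d x z + lambda * d (T x) (T z).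
Proof.
  intros [Halpha [Hlambda [_ Hcrr]]] Hxy Hyz Hxz.
  pose proof (Hcrr x y z Hxy Hyz Hxz) as Hxyz.
  assert (HTy : d (T x) (T y) <= d (T x) (T z) + d (T y) (T z)).
  { rewrite (metric_sym (T y)). apply metric_triangle. }
  assert (Hyz' : alpha * d y z <= alpha * (d x y + d x z)).
  { apply Rmult_le_compat_l; [lra|].
    rewrite (metric_sym x y). apply metric_triangle. }
  assert (Hz : lambda * d z (T z) <= lambda * (d x z + d x (T x) + d (T x) (T z))).
  { apply Rmult_le_compat_l; [lra|].
    rewrite (metric_sym x z).
    pose proof (metric_triangle z x (T z)); pose proof (metric_triangle x (T x) (T z)); lra. }
  rewrite (metric_sym z x) in Hxyz.
  lra.
Qed.

End GenCRR.

Theorem proposition2p5 (X : Type) (d : X -> X -> R) (T : X -> X) (alpha lambda : R)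
  (x : X) :
  is_metric d -> at_least_three X -> gen_CRR d T alpha lambda ->
  accumulation_point d x -> continuous_at d T x ->
  forall y : X, d (T x) (T y) <= alpha * d x y + lambda * (d x (T x) + d y (T y) / 2).
Proof.
  intros Hd _ HT Hacc Hcont y.
  pose proof HT as [Halpha [Hlambda _]].
  destruct (classic (x = y)) as [<- | Hxy].
  { rewrite !metric_xx by assumption.
    pose proof (metric_ge0 _ _ Hd x (T x)); nra. }
  apply Rle_plus_epsilon; intros eps Heps.
  set (e := eps / (alpha + lambda + 1)).
  assert (He : 0 < e) by (apply Rdiv_lt_0_compat; lra).
  assert (Heeps : (alpha + lambda + 1) * e = eps) by (unfold e; field; lra).
  destruct (accumulation_point_near_continuous _ _ Hd T x y Hacc Hcont Hxy e He)
    as [z [Hzx [Hzy [Hdz HdTz]]]].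
  pose proof (gen_CRR_twice_bound _ _ Hd T alpha lambda x y z HT Hxy
                (not_eq_sym Hzy) (not_eq_sym Hzx)).
  assert (Herr : (2 * alpha + lambda) * d x z + lambda * d (T x) (T z) <= 2 * eps) by nra.
  lra.
Qed.
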